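(* For every $n$ there exist $n$ weighted sites in the Euclidean plane whose weighted order-$3$ Voronoi diagram has $\Omega(n^2)$ non-empty regions.
   Context: Site $s_i\in\mathbb R^2$ has weight $w_i>0$ and $\omega_i=w_i^{1/2}$; the weighted distance from $p$ to $s_i$ is $\|s_i-p\|_2/\omega_i$ (multiplicatively weighted). For $A\subseteq S$ with $|A|=3$, the order-$3$ Voronoi region of $A$ is the set of points $p$ for which there exists $r$ with $\|s_i-p\|_2\le\omega_i r$ for all $s_i\in A$ and $\|s_i-p\|_2>\omega_i r$ for all $s_i\notin A$. *)

From HB Require Import structures.
From mathcomp Require Import all_boot all_order all_algebra.
From mathcomp Require Import boolp reals.
Set Implicit Arguments. Unset Strict Implicit. Unset Printing Implicit Defensive.
Import Order.TTheory GRing.Theory Num.Theory.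
Local Open Scope ring_scope.

Definition pt (R : realType) := (R * R)%type.

Definition edist (R : realType) (a b : pt R) : R :=
  Num.sqrt ((a.1 - b.1) ^+ 2 + (a.2 - b.2) ^+ 2).

Definition omega (R : realType) (wi : R) : R := Num.sqrt wi.

(* p belongs to the multiplicatively weighted order-k Voronoi region of A
   (A a set of site indices): there is r such that
   ||s_i - p|| <= omega_i r for i in A and ||s_i - p|| > omega_i r for i not in A. *)
Definition in_region (R : realType) (n : nat) (s : 'I_n -> pt R) (w : 'I_n -> R)
    (A : {set 'I_n}) (p : pt R) : Prop :=
  exists r : R,
    (forall i, i \in A -> edist (s i) p <= omega (w i) * r) /\
    (forall i, i \notin A -> edist (s i) p > omega (w i) * r).

Definition region_nonempty (R : realType) (n : nat) (s : 'I_n -> pt R) (w : 'I_n -> R)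
    (A : {set 'I_n}) : Prop :=
  exists p : pt R, in_region s w A p.

Definition num_order3_regions (R : realType) (n : nat) (s : 'I_n -> pt R)
    (w : 'I_n -> R) : nat :=
  #|[set A : {set 'I_n} | (#|A| == 3) && `[< region_nonempty s w A >]]|.

From HB Require Import structures.
From mathcomp Require Import all_boot all_order all_algebra.
From mathcomp Require Import boolp reals.
From mathcomp Require Import zify ring lra.
Set Implicit Arguments. Unset Strict Implicit.
Import Order.TTheory GRing.Theory Num.Theory.
Local Open Scope ring_scope.

(* Take M = n^2 + 1 and m = n/2.  The m "light" sites sit on the x-axis at
   (2M(i+1), 0) with weight 1; the n - m "heavy" sites sit on the y-axis at
   (0, 2l) with weight M.  For a light index i and consecutive heavy indices
   l = j, j+1, the point p = (2M(i+1), 2j+1) with squared radius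
   rho = 4M(i+1)^2 + 1/M sees exactly the three sites i, j, j+1 inside their
   weighted discs: the heavy sites j, j+1 lie on the boundary, the other heavy
   sites are strictly farther, the light site i is close since 2j+1 <= n, and
   the other light sites are at least 2M away.  So each of the m(m-1) triples
   {i, j, j+1} has a non-empty region, and m(m-1) >= n^2/16 once n >= 6. *)

Definition sqdist (R : realType) (a b : pt R) : R :=
  (a.1 - b.1) ^+ 2 + (a.2 - b.2) ^+ 2.

(* This removes the square roots in edist and omega. *)
Lemma in_region_sqdist (R : realType) (n : nat) (s : 'I_n -> pt R)
    (w : 'I_n -> R) (A : {set 'I_n}) (p : pt R) (rho : R) :
  0 <= rho -> (forall k, 0 <= w k) ->
  (forall k, k \in A -> sqdist (s k) p <= w k * rho) ->
  (forall k, k \notin A -> w k * rho < sqdist (s k) p) ->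
  in_region s w A p.
Proof.
move=> rho_ge0 w_ge0 inA notinA; exists (Num.sqrt rho).
split=> k kA; rewrite /edist /omega -sqrtrM //.
- by rewrite ler_sqrt ?mulr_ge0 //; exact: inA.
- by rewrite ltr_sqrt ?(le_lt_trans _ (notinA k kA)) ?mulr_ge0.
Qed.

Lemma natr_sqr_gap (R : realDomainType) (a b : nat) :
  a != b -> 1 <= (a%:R - b%:R) ^+ 2 :> R.
Proof.
case: (ltngtP a b) => // ab _.
- have : a%:R + 1 <= b%:R :> R by rewrite natr1 ler_nat.
  by nra.
- have : b%:R + 1 <= a%:R :> R by rewrite natr1 ler_nat.
  by nra.
Qed.

Lemma odd_gap_sqr_one (R : realDomainType) (l j : nat) :
  l = j \/ l = j.+1 -> (2 * l%:R - (2 * j%:R + 1)) ^+ 2 = 1 :> R.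
Proof. by case=> ->; rewrite -?(natr1 R j); ring. Qed.

Lemma odd_gap_sqr_large (R : realDomainType) (l j : nat) :
  l != j -> l != j.+1 -> 9 <= (2 * l%:R - (2 * j%:R + 1)) ^+ 2 :> R.
Proof.
move=> lj lj1; case: (ltnP l j) => [lt_lj|le_jl].
- have : l%:R + 1 <= j%:R :> R by rewrite natr1 ler_nat.
  by nra.
- have : j%:R + 2 <= l%:R :> R by rewrite -natrD ler_nat; lia.
  by nra.
Qed.

Definition nlight (n : nat) : nat := (n %/ 2)%N.

Definition heavy (R : realType) (n : nat) : R := n%:R ^+ 2 + 1.

Definition site (R : realType) (n : nat) (k : 'I_n) : pt R :=
  if (k < nlight n)%N then (2 * heavy R n * (k%:R + 1), 0)
  else (0, 2 * (k - nlight n)%:R).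

Definition weight (R : realType) (n : nat) (k : 'I_n) : R :=
  if (k < nlight n)%N then 1 else heavy R n.

Arguments site : clear implicits.
Arguments weight : clear implicits.

Definition triple (n i j : nat) : {set 'I_n} :=
  [set k : 'I_n | [|| val k == i, val k == nlight n + j
                    | val k == (nlight n + j).+1]].

Lemma heavy_gt1 (R : realType) (n : nat) : 1 <= heavy R n.
Proof. by rewrite /heavy; nra. Qed.

Lemma weight_gt0 (R : realType) (n : nat) (k : 'I_n) : 0 < weight R n k.
Proof.
by rewrite /weight; case: ifP => _; last exact: lt_le_trans (heavy_gt1 R n).
Qed.

(* Light sites are separated on the x-axis, heavy sites on the y-axis,
   and a light site (x > 0) never meets a heavy one (x = 0). *)
Lemma site_injective (R : realType) (n : nat) : injective (site R n).
Proof.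
have M_gt0 : 0 < 2 * heavy R n by have := heavy_gt1 R n; lra.
have light_x_gt0 (k : nat) : 2 * heavy R n * (k%:R + 1) != 0.
  by rewrite mulf_neq0 ?gt_eqF // ltr_wpDl.
move=> k1 k2; rewrite /site.
case: (ltnP k1 (nlight n)) => k1l; case: (ltnP k2 (nlight n)) => k2l /pair_equal_spec[x12 y12].
- apply: val_inj; move/(mulfI (lt0r_neq0 M_gt0))/addIr/eqP: x12.
  by rewrite eqr_nat => /eqP.
- by move: (light_x_gt0 k1); rewrite x12 eqxx.
- by move: (light_x_gt0 k2); rewrite -x12 eqxx.
- apply: val_inj => /=; have : (k1 - nlight n)%:R = (k2 - nlight n)%:R :> R by lra.
  move/eqP; rewrite eqr_nat => /eqP ek; lia.
Qed.

Section TripleRegion.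
Variables (R : realType) (n i j : nat).
Local Notation M := (heavy R n).
Local Notation m := (nlight n).

Definition witness : pt R := (2 * M * (i%:R + 1), 2 * j%:R + 1).
Definition witness_sqradius : R := 4 * M * (i%:R + 1) ^+ 2 + M^-1.

Lemma sqdist_light (k : 'I_n) : (k < m)%N ->
  sqdist (site R n k) witness = 4 * M ^+ 2 * (k%:R - i%:R) ^+ 2 + (2 * j%:R + 1) ^+ 2.
Proof. by rewrite /sqdist /site => ->; rewrite /=; ring. Qed.

Lemma sqdist_heavy (k : 'I_n) : (m <= k)%N ->
  sqdist (site R n k) witness =
  4 * M ^+ 2 * (i%:R + 1) ^+ 2 + (2 * (k - m)%:R - (2 * j%:R + 1)) ^+ 2.
Proof. by rewrite /sqdist /site leqNgt => /negbTE ->; rewrite /=; ring. Qed.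

(* Scaled by the heavy weight, the radius is exactly reached by the heavy
   sites j and j+1, whose offset along the y-axis is 1. *)
Lemma heavy_sqradius : M * witness_sqradius = 4 * M ^+ 2 * (i%:R + 1) ^+ 2 + 1.
Proof. by rewrite /witness_sqradius; field; have := heavy_gt1 R n; lra. Qed.

Hypotheses (lt_i_m : (i < m)%N) (lt_j1_m : (j.+1 < m)%N).

(* Both 2j+1 and i+1 are at most n, hence their squares are below M. *)
Lemma witness_coords_small :
  (2 * j%:R + 1) ^+ 2 <= n%:R ^+ 2 :> R /\ (i%:R + 1) ^+ 2 <= n%:R ^+ 2 :> R.
Proof.
have le2m : (2 * m <= n)%N by rewrite /nlight; lia.
have hj : 2 * j%:R + 1 <= n%:R :> R by rewrite -[2 * _]natrM natr1 ler_nat; lia.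
have hi : i%:R + 1 <= n%:R :> R by rewrite natr1 ler_nat; lia.
have j_ge0 : 0 <= j%:R :> R := ler0n _ _.
have i_ge0 : 0 <= i%:R :> R := ler0n _ _.
by split; nra.
Qed.

Lemma light_inside : (2 * j%:R + 1) ^+ 2 <= 1 * witness_sqradius.
Proof.
have [hj _] := witness_coords_small; have M1 := heavy_gt1 R n.
have Minv : 0 <= M^-1 by rewrite invr_ge0; lra.
have i_ge1 : 1 <= (i%:R + 1) ^+ 2 :> R by have := ler0n R i; nra.
have nM : n%:R ^+ 2 <= M by rewrite /heavy lerDl.
by rewrite mul1r /witness_sqradius; nra.
Qed.

Lemma light_outside (k : nat) : k != i ->
  1 * witness_sqradius < 4 * M ^+ 2 * (k%:R - i%:R) ^+ 2 + (2 * j%:R + 1) ^+ 2.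
Proof.
move=> ki; have gap := natr_sqr_gap R ki; have [_ hi] := witness_coords_small.
have M1 := heavy_gt1 R n.
have Minv : M^-1 <= 1 by rewrite invr_le1 ?unitf_gt0; lra.
have hi' : (i%:R + 1) ^+ 2 <= M - 1 by rewrite /heavy; lra.
have near : 4 * M * (i%:R + 1) ^+ 2 <= 4 * M * (M - 1) by rewrite ler_pM2l //; lra.
have far : 4 * M ^+ 2 <= 4 * M ^+ 2 * (k%:R - i%:R) ^+ 2.
  by have := sqr_ge0 M; nra.
have := sqr_ge0 (2 * j%:R + 1); rewrite mul1r /witness_sqradius.
by nra.
Qed.

Lemma triple_region_nonempty : region_nonempty (site R n) (weight R n) (triple n i j).
Proof.
have M1 := heavy_gt1 R n.
exists witness; apply: (@in_region_sqdist _ _ _ _ _ _ witness_sqradius).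
- have M_ge0 : 0 <= M by lra.
  by rewrite /witness_sqradius addr_ge0 ?invr_ge0 // mulr_ge0 ?sqr_ge0 // mulr_ge0.
- by move=> k; apply: ltW; exact: weight_gt0.
- move=> k; rewrite inE /= /weight; case: ltnP => km kT.
  + rewrite sqdist_light // (_ : k = i :> nat); last by lia.
    by rewrite subrr expr0n mulr0 add0r; exact: light_inside.
  + have gap : (2 * (k - m)%:R - (2 * j%:R + 1)) ^+ 2 = 1 :> R.
      by apply: odd_gap_sqr_one; lia.
    by rewrite sqdist_heavy // heavy_sqradius gap.
- move=> k; rewrite inE /= /weight; case: ltnP => km kT.
  + by rewrite sqdist_light //; apply: light_outside; lia.
  + have gap : 9 <= (2 * (k - m)%:R - (2 * j%:R + 1)) ^+ 2 :> R.
      by apply: odd_gap_sqr_large; lia.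
    by rewrite sqdist_heavy // heavy_sqradius ltrD2l; lra.
Qed.

End TripleRegion.

Lemma card_triple (n i j : nat) :
  (i < nlight n)%N -> (j.+1 < nlight n)%N -> #|triple n i j| = 3%N.
Proof.
move=> lt_i lt_j; have le2m : (2 * nlight n <= n)%N by rewrite /nlight; lia.
have hi : (i < n)%N by lia.
have hj : (nlight n + j < n)%N by lia.
have hj1 : ((nlight n + j).+1 < n)%N by lia.
have -> : triple n i j = Ordinal hi |: (Ordinal hj |: [set Ordinal hj1]).
  by apply/setP => k; rewrite !inE -!val_eqE.
rewrite !cardsU1 cards1 !inE -!val_eqE /=.
by have -> : i == nlight n + j = false; [lia | have -> : i == (nlight n + j).+1 = false; lia].
Qed.

Lemma triple_inj (n i j i' j' : nat) :
  (i < nlight n)%N -> (j.+1 < nlight n)%N ->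
  (i' < nlight n)%N -> (j'.+1 < nlight n)%N ->
  triple n i j = triple n i' j' -> i = i' /\ j = j'.
Proof.
move=> lt_i lt_j lt_i' lt_j' Tij.
have le2m : (2 * nlight n <= n)%N by rewrite /nlight; lia.
have hi : (i < n)%N by lia.
have hj : (nlight n + j < n)%N by lia.
have hj' : (nlight n + j' < n)%N by lia.
have mem k : (k \in triple n i j) = (k \in triple n i' j') by rewrite Tij.
move: (mem (Ordinal hi)) (mem (Ordinal hj)) (mem (Ordinal hj')).
rewrite !inE /= !eqxx /= !orbT => /esym ei /esym ej ej'.
lia.
Qed.

Lemma many_nonempty_regions (R : realType) (n : nat) :
  (nlight n * (nlight n).-1 <= num_order3_regions (site R n) (weight R n))%N.
Proof.
set m := nlight n.
have lt_j1 (j : 'I_m.-1) : ((j : nat).+1 < m)%N by have := ltn_ord j; lia.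
pose T (ij : 'I_m * 'I_m.-1) := triple n ij.1 ij.2.
have T_inj : injective T.
  move=> [i j] [i' j'] /= /triple_inj[] // [ei ej].
  by congr pair; apply: val_inj.
have T_sub : T @: setT \subset
    [set A : {set 'I_n} | (#|A| == 3%N) &&
                          `[< region_nonempty (site R n) (weight R n) A >]].
  apply/subsetP => _ /imsetP [[i j] _ ->]; rewrite inE /T /=.
  rewrite card_triple ?lt_j1 //=; apply: asboolT.
  exact: triple_region_nonempty.
by have := subset_leq_card T_sub; rewrite card_imset // cardsT card_prod !card_ord.
Qed.

Theorem mainTheorem19 (R : realType) :
  exists c : R, 0 < c /\
  exists n0 : nat, forall n : nat, (n0 <= n)%N ->
    exists (s : 'I_n -> pt R) (w : 'I_n -> R),
      injective s /\ (forall i, 0 < w i) /\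
      c * (n%:R) ^+ 2 <= (num_order3_regions s w)%:R.
Proof.
exists (1 / 16); split; first lra.
exists 6%N => n n_ge6; exists (site R n), (weight R n).
split; [exact: site_injective | split; first exact: weight_gt0].
have count := many_nonempty_regions R n.
have sq_bound : (n * n <= 16 * (nlight n * (nlight n).-1))%N by rewrite /nlight; nia.
rewrite -(ler_nat R) in count; rewrite -(ler_nat R) in sq_bound.
by move: count sq_bound; rewrite !natrM expr2; lra.
Qed.
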